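(* Let $R$ be a ring with identity and $a,b,c\in R$. Then: (i) if $a$ is right annihilator $(b,c)$-invertible, then $b^\circ=(cab)^\circ$; (ii) if $a$ is left annihilator $(b,c)$-invertible, then ${}^\circ c={}^\circ(cab)$.
   Context: For $x\in R$: $x^\circ=\{r\in R: xr=0\}$, ${}^\circ x=\{r\in R: rx=0\}$. The element $a$ is right annihilator $(b,c)$-invertible if there is $y\in R$ with $c^\circ\subseteq y^\circ$ and $yab=b$; left annihilator $(b,c)$-invertible if there is $y\in R$ with ${}^\circ b\subseteq {}^\circ y$ and $cay=c$. *)

From mathcomp Require Import all_boot all_algebra.
Set Implicit Arguments. Unset Strict Implicit. Unset Printing Implicit Defensive.
Import GRing.Theory.
Local Open Scope ring_scope.

Definition rann (R : pzRingType) (x : R) : R -> Prop := fun r => x * r = 0.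
Definition lann (R : pzRingType) (x : R) : R -> Prop := fun r => r * x = 0.

Definition right_ann_bc_inv (R : pzRingType) (a b c : R) : Prop :=
  exists y : R, (forall r, rann c r -> rann y r) /\ y * a * b = b.

Definition left_ann_bc_inv (R : pzRingType) (a b c : R) : Prop :=
  exists y : R, (forall r, lann b r -> lann y r) /\ c * a * y = c.

From mathcomp Require Import all_boot all_algebra.
Local Open Scope ring_scope.
Import GRing.Theory.

(* If [y] annihilates on the right whatever [c] does, then [c a b r = 0]
   gives [y a b r = 0], and [y a b = b] turns this into [b r = 0]; the left
   case is the mirror image. *)

Lemma rann_mull (R : pzRingType) (x b r : R) : rann b r -> rann (x * b) r.
Proof. by rewrite /rann -mulrA => ->; rewrite mulr0. Qed.

Lemma lann_mulr (R : pzRingType) (c x r : R) : lann c r -> lann (c * x) r.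
Proof. by rewrite /lann mulrA => ->; rewrite mul0r. Qed.

Lemma right_ann_bc_inv_rann (R : pzRingType) (a b c r : R) :
  right_ann_bc_inv a b c -> rann (c * a * b) r -> rann b r.
Proof.
move=> [y [sub_cy yab]] cabr.
have : rann y (a * b * r) by apply: sub_cy; rewrite /rann !mulrA.
by rewrite /rann !mulrA yab.
Qed.

Lemma left_ann_bc_inv_lann (R : pzRingType) (a b c r : R) :
  left_ann_bc_inv a b c -> lann (c * a * b) r -> lann c r.
Proof.
move=> [y [sub_by cay]] rcab.
have : lann y (r * c * a) by apply: sub_by; rewrite /lann -rcab !mulrA.
by rewrite /lann -!mulrA (mulrA c) cay.
Qed.

Theorem proposition2p9 (R : pzRingType) (a b c : R) :
  (right_ann_bc_inv a b c -> forall r : R, rann b r <-> rann (c * a * b) r) /\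
  (left_ann_bc_inv a b c -> forall r : R, lann c r <-> lann (c * a * b) r).
Proof.
split=> [inv_r r | inv_l r]; split.
- exact: rann_mull.
- exact: right_ann_bc_inv_rann.
- by rewrite -mulrA; apply: lann_mulr.
- exact: left_ann_bc_inv_lann.
Qed.
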